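(* Let $\{e_n\}_{n\in\mathbb{Z}}$ be i.i.d. real random variables whose common distribution has a continuous, bounded, strictly positive density on $\mathbb{R}$. Let $q,d\ge1$ be integers and $r,\mu_1,\mu_2,\phi_1,\dots,\phi_q,\psi_1,\dots,\psi_q\in\mathbb{R}$, and let $\{y_n\}_{n\in\mathbb{Z}}$ be the unique strictly stationary solution of $$y_n=\begin{cases}\mu_1+e_n+\sum_{i=1}^q\phi_ie_{n-i}, & \text{if } y_{n-d}\le r,\\ \mu_2+e_n+\sum_{i=1}^q\psi_ie_{n-i}, & \text{if } y_{n-d}>r.\end{cases}$$ Then there exists $\rho\in(0,1)$ such that for all $u,v\in\mathbb{R}$, $$\big|\mathbb{P}(y_0\le u,\ y_k\le v)-\mathbb{P}(y_0\le u)\,\mathbb{P}(y_k\le v)\big|=O(\rho^k)\quad\text{as } k\to\infty.$$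
   Context: A solution means a process on the same probability space as $\{e_n\}$ satisfying the equation almost surely for every $n$. Under the density assumption, with $a_n=\mu_2+e_n+\sum_{i=1}^q\psi_ie_{n-i}$ and $b_n=\mu_1+e_n+\sum_{i=1}^q\phi_ie_{n-i}$, one has $\mathbb{P}(a_n\le r, b_n\le r)+\mathbb{P}(a_n>r,b_n>r)\neq0$, so a unique strictly stationary ergodic solution exists. *)

From HB Require Import structures.
From mathcomp Require Import all_boot all_order all_algebra.
From mathcomp Require Import all_classical all_reals all_analysis.
Set Implicit Arguments. Unset Strict Implicit. Unset Printing Implicit Defensive.
Import Order.TTheory GRing.Theory Num.Theory.
Local Open Scope classical_set_scope.
Local Open Scope ring_scope.

Section Defs.
Context {d0 : measure_display} {T : measurableType d0} {R : realType}.
Variable P : probability T R.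

Definition mutually_independent (X : int -> T -> R) : Prop :=
  forall (m : nat) (t : 'I_m -> int), injective t ->
  forall A : 'I_m -> set R, (forall i, measurable (A i)) ->
  P [set w | forall i : 'I_m, A i (X (t i) w)] =
  (\prod_(i < m) P (X (t i) @^-1` A i))%E.

(* Strict stationarity: every finite-dimensional distribution is shift
   invariant (stated on measurable rectangles, which determine the law). *)
Definition strictly_stationary (X : int -> T -> R) : Prop :=
  forall (m : nat) (t : 'I_m -> int) (h : int) (A : 'I_m -> set R),
  (forall i, measurable (A i)) ->
  P [set w | forall i : 'I_m, A i (X (t i + h) w)] =
  P [set w | forall i : 'I_m, A i (X (t i) w)].

Definition has_density (X : T -> R) (f : R -> R) : Prop :=
  forall A : set R, measurable A ->
  P (X @^-1` A) = (\int[lebesgue_measure]_(x in A) (f x)%:E)%E.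

Definition tma_rhs (e : int -> T -> R) (q d : nat) (r mu1 mu2 : R)
  (phi psi : 'I_q -> R) (y : int -> T -> R) (n : int) (w : T) : R :=
  if y (n - d%:Z) w <= r
  then mu1 + e n w + \sum_(i < q) phi i * e (n - (i.+1)%:Z) w
  else mu2 + e n w + \sum_(i < q) psi i * e (n - (i.+1)%:Z) w.

End Defs.

From HB Require Import structures.
From mathcomp Require Import all_boot all_order all_algebra.
From mathcomp Require Import all_classical all_reals all_analysis.
From mathcomp Require Import ring lra zify.
Import Order.TTheory GRing.Theory Num.Theory numFieldNormedType.Exports.
Local Open Scope classical_set_scope.
Local Open Scope ring_scope.

(* Call t a reset time when e_t lies below a fixed level and e_{t-1}, ...,
   e_{t-q} lie in [-1, 1]: then both moving-average branches are <= r, so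
   y_t <= r whatever y_{t-d} was.  By positivity of the density a reset has a
   fixed probability p > 0.  Following the chain t - d, t - 2d, ... back to the
   most recent reset, the regime of y_t is a function of the noise since that
   reset; hence, off an event of probability (1-p)^N (no reset among N
   disjoint windows), y_t is a function of the noise on a window of length
   about N (q+1) d before t.  For N ~ k / ((q+1) d) the approximations of
   y_0 and y_k depend on disjoint blocks of the i.i.d. noise and are
   independent, which gives the geometric rate. *)

Section IndependenceExtension.
Context {d0 : measure_display} {T : measurableType d0} {R : realType}.
Variable P : probability T R.

Lemma probability_fineK {A : set T} : measurable A -> P A = (fine (P A))%:E.
Proof. by move=> mA; rewrite fineK // fin_num_measure. Qed.

Lemma indep_setC (S Y : set T) : measurable S -> measurable Y ->
  P (S `&` Y) = (P S * P Y)%E -> P (~` S `&` Y) = (P (~` S) * P Y)%E.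
Proof.
move=> mS mY HS.
rewrite probability_setC //.
rewrite (_ : ~` S `&` Y = Y `\` (Y `&` S)); last first.
  apply/seteqP; split => w /=; first by move=> [nS Yw]; split => // -[].
  by move=> [Yw H]; split => // Sw; apply: H.
rewrite measureD //; last 2 first.
- exact: measurableI.
- by apply: le_lt_trans (probability_le1 _ mY) _; rewrite ltry.
rewrite setIA setIid.
change (P Y - P (Y `&` S) = (1 - P S) * P Y)%E.
rewrite (setIC Y S) HS (probability_fineK mS) (probability_fineK mY).
by rewrite -!EFinM -!EFinB; congr EFin; ring.
Qed.

Lemma indep_bigcup (F : (set T)^nat) (Y : set T) :
  (forall k, measurable (F k)) -> measurable Y -> trivIset setT F ->
  (forall k, P (F k `&` Y) = (P (F k) * P Y)%E) ->
  P (\bigcup_k F k `&` Y) = (P (\bigcup_k F k) * P Y)%E.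
Proof.
move=> mF mY tF HF.
rewrite setI_bigcupl !measure_bigcup //; last 2 first.
- by move=> k _; apply: measurableI.
- exact: trivIset_setIr.
rewrite (probability_fineK mY) muleC -nneseriesZl; last by move=> i _.
apply: eq_eseriesr => k _.
transitivity (P (F k) * P Y)%E; first exact: HF.
by rewrite muleC -(probability_fineK mY).
Qed.

Lemma indep_smallest_sigma (G : set (set T)) (Y : set T) :
  G `<=` measurable -> setI_closed G -> measurable Y ->
  (forall X, G X -> P (X `&` Y) = (P X * P Y)%E) ->
  forall X, <<s G >> X -> P (X `&` Y) = (P X * P Y)%E.
Proof.
move=> GM GI mY HG.
have sGM : <<s G >> `<=` measurable.
  exact: smallest_sub (sigma_algebra_measurable T) GM.
have mE : @measurable _ (g_sigma_algebraType G) = <<s G >> by [].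
move=> X HX.
refine (@dynkin_induction _ (g_sigma_algebraType G) G
  (fun X => P (X `&` Y) = (P X * P Y)%E) mE GI _ HG _ _ X HX).
- by rewrite setTI probability_setT mul1e.
- by move=> S mS HS; apply: indep_setC => //; apply: sGM.
- by move=> F mF tF HF; exact: indep_bigcup (fun k => sGM _ (mF k)) mY tF HF.
Qed.

End IndependenceExtension.

Section NoiseCylinders.
Context {d0 : measure_display} {T : measurableType d0} {R : realType}.
Variable P : probability T R.
Variable e : int -> T -> R.
Hypothesis me : forall n, measurable_fun setT (e n).
Hypothesis ind : mutually_independent P e.

Definition cylinder (s : seq int) (A : int -> set R) : set T :=
  [set w | forall i, i \in s -> A i (e i w)].

Definition cylinders (S : set int) : set (set T) :=
  [set X | exists s A, (forall i, i \in s -> S i) /\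
     (forall i, measurable (A i)) /\ X = cylinder s A].

Definition noise_sigma (S : set int) := <<s cylinders S >>.

Lemma cylinder_cons i s A : cylinder (i :: s) A = e i @^-1` A i `&` cylinder s A.
Proof.
apply/seteqP; split => w /=.
  move=> H; split; first by apply: H; rewrite inE eqxx.
  by move=> j js; apply: H; rewrite inE js orbT.
by move=> [H1 H2] j; rewrite inE => /orP[/eqP->//|]; apply: H2.
Qed.

Lemma measurable_cylinder s A : (forall i, measurable (A i)) ->
  measurable (cylinder s A).
Proof.
move=> mA; elim: s => [|i s IH].
  by rewrite (_ : cylinder [::] A = setT) //; apply/seteqP; split => w //= _ j.
rewrite cylinder_cons; apply: measurableI => //.
by rewrite -(setTI (_ @^-1` _)); apply: me.
Qed.

Lemma cylinder_undup s A : cylinder (undup s) A = cylinder s A.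
Proof.
by apply/seteqP; split => w /= H i; [rewrite -mem_undup|rewrite mem_undup]; apply: H.
Qed.

Lemma probability_cylinder s A : uniq s -> (forall i, measurable (A i)) ->
  P (cylinder s A) = (\prod_(i <- s) P (e i @^-1` A i))%E.
Proof.
move=> us mA.
have inj : injective (fun j : 'I_(size s) => nth 0 s j).
  by move=> i j /eqP; rewrite nth_uniq // => /eqP/val_inj.
have -> : cylinder s A =
    [set w | forall j : 'I_(size s), A (nth 0 s j) (e (nth 0 s j) w)].
  apply/seteqP; split => w /= Hw; first by move=> j; apply/Hw/mem_nth.
  move=> i is_; have := Hw (Ordinal (etrans (index_mem i s) is_)).
  by rewrite /= nth_index.
rewrite (ind _ _ inj (fun j => A (nth 0 s j)) (fun j => mA _)) (big_nth 0) big_mkord.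
exact: eq_bigr.
Qed.

Lemma cylinders_measurable S : cylinders S `<=` measurable.
Proof. by move=> X [s [A [_ [mA ->]]]]; apply: measurable_cylinder. Qed.

Lemma noise_sigma_measurable S : noise_sigma S `<=` measurable.
Proof.
exact: smallest_sub (sigma_algebra_measurable T) (@cylinders_measurable S).
Qed.

Lemma cylinders_setI_closed S : setI_closed (cylinders S).
Proof.
move=> X Y [s1 [A1 [S1 [mA1 ->]]]] [s2 [A2 [S2 [mA2 ->]]]].
exists (s1 ++ s2), (fun i => (if i \in s1 then A1 i else setT) `&`
                             (if i \in s2 then A2 i else setT)).
split; first by move=> i; rewrite mem_cat => /orP[/S1|/S2].
split; first by move=> i; apply: measurableI; case: ifP.
apply/seteqP; split => w /=.
  by move=> [H1 H2] i _; split; case: ifP => // Hi; [exact: H1|exact: H2].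
move=> H; split => i Hi.
  have Hc : i \in s1 ++ s2 by rewrite mem_cat Hi.
  by have [+ _] := H i Hc; rewrite Hi.
have Hc : i \in s1 ++ s2 by rewrite mem_cat Hi orbT.
by have [_ +] := H i Hc; rewrite Hi.
Qed.

Lemma noise_sigma_setT S : noise_sigma S setT.
Proof.
apply: sub_sigma_algebra; exists [::], (fun _ => setT).
by do 2 split => //; apply/seteqP; split.
Qed.

Lemma noise_sigma_setC S A : noise_sigma S A -> noise_sigma S (~` A).
Proof. exact: sigma_algebraC. Qed.

Lemma noise_sigma_setI S A B :
  noise_sigma S A -> noise_sigma S B -> noise_sigma S (A `&` B).
Proof. exact: (@measurableI _ (g_sigma_algebraType (cylinders S)) A B). Qed.

Lemma noise_sigma_setU S A B :
  noise_sigma S A -> noise_sigma S B -> noise_sigma S (A `|` B).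
Proof. exact: (@measurableU _ (g_sigma_algebraType (cylinders S)) A B). Qed.

Lemma noise_sigma_sub S S' : S `<=` S' -> noise_sigma S `<=` noise_sigma S'.
Proof.
move=> SS'; apply: smallest_sub; first exact: smallest_sigma_algebra.
move=> X [s [A [Hs [mA ->]]]]; apply: sub_sigma_algebra.
by exists s, A; split => // i /Hs /SS'.
Qed.

Lemma indep_cylinders S1 S2 X Y : (forall i, S1 i -> ~ S2 i) ->
  cylinders S1 X -> cylinders S2 Y -> P (X `&` Y) = (P X * P Y)%E.
Proof.
move=> dis [s1 [A1 [H1 [mA1 ->]]]] [s2 [A2 [H2 [mA2 ->]]]].
rewrite -(cylinder_undup s1) -(cylinder_undup s2).
set u1 := undup s1; set u2 := undup s2.
pose A i := if i \in u1 then A1 i else A2 i.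
have mA i : measurable (A i) by rewrite /A; case: ifP.
have dj i : i \in u1 -> i \notin u2.
  by rewrite !mem_undup => /H1 h1; apply/negP => /H2; exact: dis.
have -> : cylinder u1 A1 `&` cylinder u2 A2 = cylinder (u1 ++ u2) A.
  apply/seteqP; split => w /=.
    move=> [Hx Hy] i; rewrite mem_cat /A => /orP[Hi|Hi].
      by rewrite Hi; exact: Hx.
    by case: ifP => [/dj|]; [rewrite Hi|move=> _; exact: Hy].
  move=> H; split => i Hi; have := H i; rewrite mem_cat Hi ?orbT /A /= => /(_ isT).
    by rewrite Hi.
  by case: ifP => // /dj; rewrite Hi.
have u12 : uniq (u1 ++ u2).
  rewrite cat_uniq !undup_uniq /= andbT; apply/hasPn => i /= Hi.
  by apply/negP => /dj; rewrite Hi.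
rewrite !probability_cylinder ?undup_uniq // big_cat /=.
congr (_ * _)%E; apply: eq_big_seq => i Hi; rewrite /A; first by rewrite Hi.
by case: ifP => // /dj; rewrite Hi.
Qed.

Lemma indep_noise_sigma S1 S2 X Y : (forall i, S1 i -> ~ S2 i) ->
  noise_sigma S1 X -> noise_sigma S2 Y -> P (X `&` Y) = (P X * P Y)%E.
Proof.
move=> dis sX sY.
apply: (indep_smallest_sigma P _ _ (@cylinders_measurable S1)
  (@cylinders_setI_closed S1) (@noise_sigma_measurable _ _ sY)) => // X' cX'.
rewrite setIC muleC.
apply: (indep_smallest_sigma P _ _ (@cylinders_measurable S2)
  (@cylinders_setI_closed S2) (@cylinders_measurable _ _ cX')) => // Y' cY'.
by rewrite setIC muleC; apply: indep_cylinders cX' cY'.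
Qed.

Lemma measurable_noise S i : S i ->
  measurable_fun setT (e i : g_sigma_algebraType (cylinders S) -> R).
Proof.
move=> Si _ B mB; rewrite setTI; apply: sub_sigma_algebra.
exists [:: i], (fun _ => B); split; first by move=> j; rewrite inE => /eqP->.
split => //; apply/seteqP; split => w /=; first by move=> H j; rewrite inE => /eqP->.
by apply; rewrite inE.
Qed.

Lemma noise_sigma_le S (g : T -> R) c :
  measurable_fun setT (g : g_sigma_algebraType (cylinders S) -> R) ->
  noise_sigma S [set w | g w <= c].
Proof.
by move=> mg; have := mg measurableT _ (measurable_itv `]-oo, c]); rewrite setTI.
Qed.

Definition ma_term (q : nat) (mu : R) (phi : 'I_q -> R) (t : int) (w : T) : R :=
  mu + e t w + \sum_(i < q) phi i * e (t - (i.+1)%:Z) w.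

Lemma ma_term_le_sigma S (q : nat) (mu c : R) (phi : 'I_q -> R) (t : int) :
  (forall x, t - q%:Z <= x <= t -> S x) ->
  noise_sigma S [set w | ma_term q mu phi t w <= c].
Proof.
move=> HS; apply: noise_sigma_le.
apply: measurable_realfun.measurable_funD; first apply: measurable_realfun.measurable_funD.
- exact: measurable_cst.
- by apply: measurable_noise; apply: HS; lia.
- apply: measurable_sum => i; apply: measurable_realfun.measurable_funM.
    exact: measurable_cst.
  by apply: measurable_noise; apply: HS; have := ltn_ord i; lia.
Qed.

End NoiseCylinders.

Lemma integral_itv_gt0 {R : realType} (f : R -> R) (a b : R) : a < b ->
  continuous f -> (forall x, 0 < f x) ->
  (0 < \int[lebesgue_measure]_(x in `[a, b]) (f x)%:E)%E.
Proof.
move=> ab fc fp.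
have [c cab Hc] := EVT_min (ltW ab) (continuous_subspaceT fc).
apply: (@lt_le_trans _ _ (\int[lebesgue_measure]_(x in `[a, b]) cst (f c)%:E x)%E).
  rewrite integral_cst //; apply: mule_gt0; first by rewrite lte_fin.
  have := lebesgue_measure_itv `[a, b]; rewrite /= lte_fin ab => ->.
  by rewrite lte_fin subr_gt0.
apply: ge0_le_integral => //.
- by move=> x _; rewrite lee_fin; apply: ltW.
- apply/measurable_realfun.measurable_EFinP.
  apply: measurable_funS (measurable_realfun.continuous_measurable_fun fc) => //.
Qed.

Section Coupling.
Context {d0 : measure_display} {T : measurableType d0} {R : realType}.
Variable e : int -> T -> R.
Variables (q d : nat) (r mu1 mu2 : R) (phi psi : 'I_q -> R) (y : int -> T -> R).

Let ma1 := ma_term e q mu1 phi.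
Let ma2 := ma_term e q mu2 psi.

(* [low_regime t L w] guesses whether y_t <= r by running the threshold
   recursion L steps back along t - d, t - 2d, ..., starting from the guess
   "low" L steps back. *)
Fixpoint low_regime (t : int) (L : nat) (w : T) : bool :=
  if L is L'.+1 then
    (if low_regime (t - d%:Z) L' w then ma1 t w else ma2 t w) <= r
  else true.

Definition approx_value (t : int) (L : nat) (w : T) : R :=
  if low_regime (t - d%:Z) L w then ma1 t w else ma2 t w.

Definition reset (t : int) (w : T) := ma1 t w <= r /\ ma2 t w <= r.

Variable w : T.
Hypothesis y_tma : forall n, y n w = tma_rhs e d r mu1 mu2 phi psi y n w.

Lemma y_tmaE n : y n w = if y (n - d%:Z) w <= r then ma1 n w else ma2 n w.
Proof. exact: y_tma. Qed.

Lemma low_regimeE L t : (exists2 j, (j <= L)%N & reset (t - (j * d)%:Z) w) ->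
  low_regime t L w = (y t w <= r).
Proof.
elim: L t => [|L IH] t [j jL Hj].
  move: jL Hj; rewrite leqn0 => /eqP->; rewrite mul0n subr0 => -[H1 H2].
  by rewrite /= y_tmaE; case: ifP.
case: j => [|j] in jL Hj *.
  move: Hj; rewrite mul0n subr0 => -[H1 H2].
  by rewrite /= y_tmaE; case: ifP => _; case: ifP => _; rewrite ?H1 ?H2.
rewrite /= (IH (t - d%:Z)); last by exists j => //; move: Hj; congr reset; lia.
by rewrite [y t w]y_tmaE.
Qed.

Lemma approx_valueE L t :
  (exists2 j, (j <= L)%N & reset (t - d%:Z - (j * d)%:Z) w) ->
  approx_value t L w = y t w.
Proof. by move=> H; rewrite /approx_value low_regimeE // [y t w]y_tmaE. Qed.

End Coupling.

Section CouplingMeasurability.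
Context {d0 : measure_display} {T : measurableType d0} {R : realType}.
Variable e : int -> T -> R.
Variables (q d : nat) (r mu1 mu2 : R) (phi psi : 'I_q -> R).

Let branch_sigma S (b : set T) t c : noise_sigma e S b ->
  (forall x, t - q%:Z <= x <= t -> S x) ->
  noise_sigma e S (b `&` [set w | ma_term e q mu1 phi t w <= c] `|`
                   ~` b `&` [set w | ma_term e q mu2 psi t w <= c]).
Proof.
move=> sb HS.
apply: noise_sigma_setU; apply: noise_sigma_setI => //;
  by [apply: noise_sigma_setC | apply: ma_term_le_sigma].
Qed.

Lemma low_regime_sigma L t S :
  (forall x, t - (L * d + q)%:Z <= x <= t -> S x) ->
  noise_sigma e S [set w | low_regime e q d r mu1 mu2 phi psi t L w].
Proof.
elim: L t S => [|L IH] t S HS.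
  by rewrite (_ : [set w | _] = setT); [apply: noise_sigma_setT|apply/seteqP; split].
set b := [set w | low_regime e q d r mu1 mu2 phi psi (t - d%:Z) L w].
have -> : [set w | low_regime e q d r mu1 mu2 phi psi t L.+1 w] =
   b `&` [set w | ma_term e q mu1 phi t w <= r] `|`
   ~` b `&` [set w | ma_term e q mu2 psi t w <= r].
  apply/seteqP; split => w /=; rewrite /b /=.
    by case: ifP => G H; [left|right; split=> //; rewrite G].
  by case: ifP => G [[G' H]|[G' H]] //; move: G'; rewrite G.
by apply: branch_sigma => [|x Hx]; [apply: IH|]; move=> *; apply: HS; lia.
Qed.

Lemma approx_value_le_sigma L t S c :
  (forall x, t - (L.+1 * d + q)%:Z <= x <= t -> S x) ->
  noise_sigma e S [set w | approx_value e q d r mu1 mu2 phi psi t L w <= c].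
Proof.
move=> HS.
set b := [set w | low_regime e q d r mu1 mu2 phi psi (t - d%:Z) L w].
have -> : [set w | approx_value e q d r mu1 mu2 phi psi t L w <= c] =
   b `&` [set w | ma_term e q mu1 phi t w <= c] `|`
   ~` b `&` [set w | ma_term e q mu2 psi t w <= c].
  apply/seteqP; split => w /=; rewrite /b /approx_value /=.
    by case: ifP => G H; [left|right; split=> //; rewrite G].
  by case: ifP => G [[G' H]|[G' H]] //; move: G'; rewrite G.
by apply: branch_sigma => [|x Hx]; [apply: low_regime_sigma|]; move=> *; apply: HS; lia.
Qed.

End CouplingMeasurability.

Section RealProbability.
Context {d0 : measure_display} {T : measurableType d0} {R : realType}.
Variable P : probability T R.

Definition pr (X : set T) : R := fine (P X).

Lemma pr_ge0 X : 0 <= pr X.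
Proof. exact/fine_ge0/measure_ge0. Qed.

Lemma pr_le {X Y} : measurable X -> measurable Y -> X `<=` Y -> pr X <= pr Y.
Proof.
move=> mX mY XY; apply: fine_le; rewrite ?fin_num_measure //.
by apply: le_measure; rewrite ?inE.
Qed.

Lemma pr_le1 X : measurable X -> pr X <= 1.
Proof.
by move=> mX; have := pr_le mX measurableT (@subsetT _ X); rewrite /pr probability_setT.
Qed.

Lemma pr_setU_le {X Y} : measurable X -> measurable Y ->
  pr (X `|` Y) <= pr X + pr Y.
Proof.
move=> mX mY; rewrite -lee_fin EFinD /pr !fineK ?fin_num_measure //.
  exact: measureU2.
exact: measurableU.
Qed.

Lemma pr_dist_le {X X' Z} : measurable X -> measurable X' -> measurable Z ->
  (forall w, ~ Z w -> (X w <-> X' w)) -> `|pr X - pr X'| <= pr Z.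
Proof.
move=> mX mX' mZ H.
have sub A B : measurable A -> measurable B -> (forall w, ~ Z w -> A w -> B w) ->
    pr A <= pr B + pr Z.
  move=> mA mB HAB; apply: le_trans (pr_setU_le mB mZ).
  apply: pr_le => //; first exact: measurableU.
  by move=> w Aw; have [Zw|nZw] := pselect (Z w); [right|left; apply: HAB].
have := sub X' X mX' mX (fun w nZ => proj2 (H w nZ)).
have := sub X X' mX mX' (fun w nZ => proj1 (H w nZ)).
rewrite ler_norml; lra.
Qed.

Lemma pr_indep {X Y} : measurable X -> measurable Y ->
  P (X `&` Y) = (P X * P Y)%E -> pr (X `&` Y) = pr X * pr Y.
Proof. by move=> mX mY H; rewrite /pr H fineM // fin_num_measure. Qed.

End RealProbability.

(* If A, B are eps-close in probability to independent events A', B' (and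
   A & B is 2 eps-close to A' & B'), then A and B are 4 eps-independent. *)
Lemma covariance_perturb {R : realFieldType} (a a' b b' c eps : R) :
  0 <= a <= 1 -> 0 <= b' <= 1 ->
  `|a - a'| <= eps -> `|b - b'| <= eps -> `|c - a' * b'| <= eps + eps ->
  `|c - a * b| <= 4 * eps.
Proof.
move=> /andP[a0 a1] /andP[b0 b1] da db dc.
have -> : c - a * b = (c - a' * b') + (a' - a) * b' + a * (b' - b) by ring.
apply: le_trans (ler_normD _ _) _; apply: le_trans (lerD (ler_normD _ _) (lexx _)) _.
rewrite !normrM (ger0_norm b0) (ger0_norm a0).
have e1 : `|a' - a| * b' <= eps by rewrite distrC; apply: le_trans (ler_piMr _ b1) _.
have e2 : a * `|b' - b| <= eps by rewrite distrC; apply: le_trans (ler_piMl _ a1) _.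
lra.
Qed.

Lemma bernoulli_ineq {R : realFieldType} (x : R) (n : nat) : 0 <= x <= 1 ->
  1 - n%:R * x <= (1 - x) ^+ n.
Proof.
move=> /andP[x0 x1]; elim: n => [|n IH]; first by rewrite expr0 mul0r subr0.
rewrite exprS.
have h : (1 - n%:R * x) * (1 - x) <= (1 - x) * (1 - x) ^+ n.
  by rewrite mulrC ler_wpM2l // subr_ge0.
apply: le_trans h; rewrite -natr1.
have : 0 <= n%:R * x * x by rewrite !mulr_ge0.
nra.
Qed.

Section GeometricRate.
Context {R : realFieldType}.
Variables (p : R) (D : nat).
Hypotheses (p_gt0 : 0 < p) (p_le1 : p <= 1) (D_gt0 : (0 < D)%N).

(* Halving p / D keeps rho away from 0 even when p = 1 and D = 1. *)
Definition geometric_rate := 1 - p / (2 * D%:R).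

Let x_gt0 : 0 < p / (2 * D%:R).
Proof. by apply: divr_gt0; rewrite // mulr_gt0 // ltr0n. Qed.

Let x_le_half : p / (2 * D%:R) <= 1 / 2.
Proof.
have D1 : 1 <= D%:R :> R by rewrite ler1n.
rewrite ler_pdivrMr; last lra.
have := le_trans p_le1 D1.
lra.
Qed.

Lemma geometric_rate_itv : 0 < geometric_rate < 1.
Proof. by move: x_gt0 x_le_half; rewrite /geometric_rate; lra. Qed.

Lemma geometric_rate_block (N : nat) : (1 - p) ^+ N <= geometric_rate ^+ (N * D).
Proof.
have hb : 1 - p <= geometric_rate ^+ D.
  have := @bernoulli_ineq R (p / (2 * D%:R)) D.
  rewrite (_ : D%:R * (p / (2 * D%:R)) = p / 2); last first.
    by field; rewrite pnatr_eq0 -lt0n.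
  move: p_gt0 x_gt0 x_le_half => ? ? ? H.
  by apply: le_trans (H _); [lra|apply/andP; split; lra].
have [rho_gt0 _] := andP geometric_rate_itv.
rewrite mulnC exprM; apply: lerXn2r => //; rewrite nnegrE.
- by rewrite subr_ge0.
- by rewrite exprn_ge0 // ltW.
Qed.

End GeometricRate.

Lemma expr_le_shift {R : realFieldType} (rho : R) (m k c : nat) :
  0 < rho <= 1 -> (k <= m + c)%N -> rho ^+ m <= rho ^+ k / rho ^+ c.
Proof.
move=> /andP[rho_gt0 rho_le1] km.
rewrite ler_pdivlMr ?exprn_gt0 // -exprD.
by apply: ler_wiXn2l => //; rewrite ltW.
Qed.

Section TMA.
Context {d0 : measure_display} {T : measurableType d0} {R : realType}.
Variable P : probability T R.
Variables (e : int -> T -> R) (f : R -> R).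
Variables (q d : nat) (r mu1 mu2 : R) (phi psi : 'I_q -> R).
Hypothesis me : forall n, measurable_fun setT (e n).
Hypothesis ind : mutually_independent P e.
Hypothesis dens : forall n, has_density P (e n) f.
Hypothesis fc : continuous f.
Hypothesis fpos : forall x, 0 < f x.

Definition reset_level :=
  r - `|mu1| - `|mu2| - \sum_(i < q) `|phi i| - \sum_(i < q) `|psi i|.

Definition reset_window (t : int) := t :: [seq t - (i.+1)%:Z | i <- iota 0 q].

Definition reset_cond (t x : int) : set R :=
  if x == t then [set` `]-oo, reset_level]] else [set` `[-1, 1]].

Definition reset_event t := cylinder e (reset_window t) (reset_cond t).

Lemma measurable_reset_cond t x : measurable (reset_cond t x).
Proof. by rewrite /reset_cond; case: ifP => _; apply: measurable_itv. Qed.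

Lemma measurable_reset_event t : measurable (reset_event t).
Proof. by apply: measurable_cylinder => //; exact: measurable_reset_cond. Qed.

Lemma uniq_reset_window t : uniq (reset_window t).
Proof.
rewrite /reset_window /= map_inj_uniq ?iota_uniq ?andbT; last by move=> i j; lia.
by apply/mapP => -[i _]; lia.
Qed.

Lemma reset_window_sub t (S : set int) : (forall x, t - q%:Z <= x <= t -> S x) ->
  forall x, x \in reset_window t -> S x.
Proof.
move=> HS x; rewrite /reset_window inE => /orP[/eqP->|/mapP[i]].
  by apply: HS; lia.
by rewrite mem_iota add0n => /andP[_ hi] ->; apply: HS; lia.
Qed.

Lemma reset_event_cylinders t (S : set int) :
  (forall x, t - q%:Z <= x <= t -> S x) -> cylinders e S (reset_event t).
Proof.
move=> HS; exists (reset_window t), (reset_cond t).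
by split; [exact: reset_window_sub|split=> //; exact: measurable_reset_cond].
Qed.

Lemma ma_term_reset_le (ph : 'I_q -> R) {t w} : reset_event t w ->
  \sum_(i < q) ph i * e (t - (i.+1)%:Z) w <= \sum_(i < q) `|ph i|.
Proof.
move=> H; apply: ler_sum => i _.
have : reset_cond t (t - (i.+1)%:Z) (e (t - (i.+1)%:Z) w).
  apply: H; rewrite inE; apply/orP; right; apply/mapP; exists (val i) => //.
  by rewrite mem_iota /= add0n.
rewrite /reset_cond; case: eqP => [|_ /=]; first lia.
rewrite in_itv /= => /andP[h1 h2].
apply: le_trans (ler_norm _) _; rewrite normrM.
by apply: ler_piMr => //; rewrite ler_norml h1 h2.
Qed.

Lemma reset_event_reset t w : reset_event t w -> reset e q r mu1 mu2 phi psi t w.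
Proof.
move=> H.
have : reset_cond t t (e t w) by apply: H; rewrite inE eqxx.
rewrite /reset_cond eqxx /= in_itv /= /reset_level => he.
have s1 := ma_term_reset_le phi H; have s2 := ma_term_reset_le psi H.
have n1 := ler_norm mu1; have n2 := ler_norm mu2.
have p1 := normr_ge0 mu1; have p2 := normr_ge0 mu2.
have a1 : 0 <= \sum_(i < q) `|phi i| by apply: sumr_ge0.
have a2 : 0 <= \sum_(i < q) `|psi i| by apply: sumr_ge0.
by rewrite /reset /ma_term; split; lra.
Qed.

Lemma noise_itv_gt0 n (A : set R) a b : a < b -> [set` `[a, b]] `<=` A ->
  measurable A -> (0 < P (e n @^-1` A))%E.
Proof.
move=> ab abA mA.
apply: (@lt_le_trans _ _ (P (e n @^-1` [set` `[a, b]]))).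
  by rewrite (dens n _ (measurable_itv _)); apply: integral_itv_gt0.
apply: le_measure; rewrite ?inE.
- by rewrite -[X in measurable X]setTI; apply: me => //; exact: measurable_itv.
- by rewrite -[X in measurable X]setTI; apply: me.
- by move=> w /= /abA.
Qed.

Lemma reset_event_gt0 : (0 < P (reset_event 0))%E.
Proof.
rewrite probability_cylinder ?uniq_reset_window //; last exact: measurable_reset_cond.
rewrite big_cons /reset_cond eqxx; apply: mule_gt0.
  apply: (@noise_itv_gt0 _ _ (reset_level - 1) reset_level).
  - by rewrite ltrBlDr ltrDl.
  - by move=> x /=; rewrite !in_itv /= => /andP[].
  - exact: measurable_itv.
rewrite big_map; apply: (big_ind (fun x => 0 < x)%E) => //.
  by move=> x y; apply: mule_gt0.
move=> i _; case: eqP => [|_]; first lia.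
by apply: (@noise_itv_gt0 _ _ (-1) 1).
Qed.

Lemma probability_reset_event t : P (reset_event t) = P (reset_event 0).
Proof.
have same A n m : measurable A -> P (e n @^-1` A) = P (e m @^-1` A).
  by move=> mA; rewrite (dens n A mA) (dens m A mA).
rewrite !probability_cylinder ?uniq_reset_window //; try exact: measurable_reset_cond.
rewrite !big_cons !big_map /reset_cond !eqxx; congr (_ * _)%E.
  by apply: same; exact: measurable_itv.
apply: eq_bigr => i _; do 2 (case: eqP => [|_]; first lia).
by apply: same; exact: measurable_itv.
Qed.

Definition p_reset := pr P (reset_event 0).

Lemma probability_reset_eventE t : P (reset_event t) = p_reset%:E.
Proof.
by rewrite probability_reset_event /p_reset /pr fineK // fin_num_measure //;
  exact: measurable_reset_event.
Qed.

Lemma p_reset_gt0 : 0 < p_reset.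
Proof. by rewrite -lte_fin -(probability_reset_eventE 0) reset_event_gt0. Qed.

Lemma p_reset_le1 : p_reset <= 1.
Proof. exact/pr_le1/measurable_reset_event. Qed.

(* A multiple of d that is at least q + 1: the reset windows at t0, t0 - D,
   t0 - 2D, ... lie on the chain of step d and are pairwise disjoint. *)
Definition block_len := (q.+1 * d)%N.

Hypothesis d_gt0 : (0 < d)%N.

Lemma block_len_ge : (q.+1 <= block_len)%N.
Proof. by rewrite /block_len leq_pmulr. Qed.

Fixpoint no_reset (t0 : int) (N : nat) : set T :=
  if N is N'.+1 then no_reset t0 N' `&` ~` reset_event (t0 - (N' * block_len)%:Z)
  else setT.

Lemma noise_sigma_no_reset t0 N :
  noise_sigma e (fun x => t0 - (N * block_len)%:Z < x) (no_reset t0 N).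
Proof.
have hD := block_len_ge.
elim: N => [|N IH] /=; first exact: noise_sigma_setT.
apply: noise_sigma_setI.
  by apply: noise_sigma_sub IH => x /=; rewrite mulSn; lia.
apply: noise_sigma_setC; apply: sub_sigma_algebra.
by apply: reset_event_cylinders => x /=; rewrite mulSn; lia.
Qed.

Lemma measurable_no_reset t0 N : measurable (no_reset t0 N).
Proof. exact: noise_sigma_measurable (noise_sigma_no_reset t0 N). Qed.

Lemma probability_no_reset t0 N : P (no_reset t0 N) = ((1 - p_reset) ^+ N)%:E.
Proof.
elim: N => [|N IH] /=; first by rewrite probability_setT expr0.
have hD := block_len_ge.
rewrite (@indep_noise_sigma _ _ _ P e me ind (fun x => t0 - (N * block_len)%:Z < x)
   (fun x => x <= t0 - (N * block_len)%:Z)); last 3 first.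
- by move=> x /=; lia.
- exact: noise_sigma_no_reset.
- apply: noise_sigma_setC; apply: sub_sigma_algebra.
  by apply: reset_event_cylinders => x /=; lia.
rewrite IH probability_setC ?probability_reset_eventE; last exact: measurable_reset_event.
by rewrite -EFinB -EFinM exprS mulrC.
Qed.

Lemma not_no_reset {t0 N w} : ~ no_reset t0 N w ->
  exists2 i, (i < N)%N & reset_event (t0 - (i * block_len)%:Z) w.
Proof.
elim: N => [|N IH] //= /not_andP[/IH [i iN Hi]|/contrapT H].
  by exists i => //; apply: ltnW.
by exists N.
Qed.

Variable y : int -> T -> R.
Hypothesis my : forall n, measurable_fun setT (y n).
Hypothesis y_tma : forall n, {ae P, forall w, y n w = tma_rhs e d r mu1 mu2 phi psi y n w}.

Lemma measurable_y_le n c : measurable [set w | y n w <= c].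
Proof.
by have := my n measurableT _ (measurable_itv `]-oo, c]); rewrite setTI.
Qed.

Lemma tma_null_set : exists Z : set T, [/\ measurable Z, P Z = 0%E &
  forall w, ~ Z w -> forall n, y n w = tma_rhs e d r mu1 mu2 phi psi y n w].
Proof.
have hall : \forall w \ae P, forall n, y n w = tma_rhs e d r mu1 mu2 phi psi y n w.
  apply: filterS2 (ae_foralln (fun n => y_tma n%:Z))
    (ae_foralln (fun n => y_tma (- n%:Z))) => w H1 H2 [n|n]; first exact: H1.
  by rewrite NegzE; apply: H2.
case: hall => Z [mZ PZ HZ]; exists Z; split => // w nZ n.
by apply: contrapT => H; apply: nZ; apply: HZ => H'; apply: H; apply: H'.
Qed.

Lemma approx_value_off_no_reset (Z : set T) t N w :
  (forall w, ~ Z w -> forall n, y n w = tma_rhs e d r mu1 mu2 phi psi y n w) ->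
  ~ (Z `|` no_reset (t - d%:Z) N) w ->
  approx_value e q d r mu1 mu2 phi psi t (N * q.+1) w = y t w.
Proof.
move=> HZ H; have [i iN Hi] := not_no_reset (fun X => H (or_intror X)).
apply: approx_valueE; first exact: HZ (fun X => H (or_introl X)).
exists (i * q.+1)%N; first by rewrite leq_mul2r ltnW ?orbT.
by rewrite -mulnA; apply: reset_event_reset.
Qed.

Lemma tma_cov_le (N k : nat) (u v : R) : (N * block_len + q + d < k)%N ->
  `|pr P ([set w | y 0 w <= u] `&` [set w | y k%:Z w <= v])
    - pr P [set w | y 0 w <= u] * pr P [set w | y k%:Z w <= v]|
  <= 4 * (1 - p_reset) ^+ N.
Proof.
move=> hk; set A := [set w | y 0 w <= u]; set B := [set w | y k%:Z w <= v].
have [Z [mZ PZ HZ]] := tma_null_set.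
set L := (N * q.+1)%N; set eps := (1 - p_reset) ^+ N.
have hLd : (L.+1 * d = d + N * block_len)%N by rewrite /L /block_len mulSn mulnA.
pose bad t := Z `|` no_reset (t - d%:Z) N.
have mbad t : measurable (bad t) by apply: measurableU => //; exact: measurable_no_reset.
have pbad t : pr P (bad t) <= eps.
  apply: le_trans (pr_setU_le _ mZ (measurable_no_reset _ _)) _.
  by rewrite /pr PZ probability_no_reset /= add0r.
pose A' := [set w | approx_value e q d r mu1 mu2 phi psi 0 L w <= u].
pose B' := [set w | approx_value e q d r mu1 mu2 phi psi k%:Z L w <= v].
have sA' : noise_sigma e (fun x => x <= 0) A'.
  by apply: approx_value_le_sigma => x; rewrite hLd; lia.
have sB' : noise_sigma e (fun x => 1 <= x) B'.
  by apply: approx_value_le_sigma => x; rewrite hLd; lia.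
have mA' := @noise_sigma_measurable _ _ _ e me _ _ sA'.
have mB' := @noise_sigma_measurable _ _ _ e me _ _ sB'.
have mA : measurable A := measurable_y_le 0 u.
have mB : measurable B := measurable_y_le k%:Z v.
have off t w : ~ bad t w -> approx_value e q d r mu1 mu2 phi psi t L w = y t w.
  exact: approx_value_off_no_reset.
apply: (@covariance_perturb _ _ (pr P A') _ (pr P B')).
- by rewrite pr_ge0 pr_le1.
- by rewrite pr_ge0 pr_le1.
- apply: le_trans (pbad 0); apply: pr_dist_le => // w H.
  by rewrite /A /A' /= off.
- apply: le_trans (pbad k%:Z); apply: pr_dist_le => // w H.
  by rewrite /B /B' /= off.
rewrite -pr_indep //; last first.
  by apply: (@indep_noise_sigma _ _ _ P e me ind (fun x => x <= 0) (fun x => 1 <= x))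
    => // x /=; lia.
apply: le_trans (le_trans (pr_setU_le P (mbad 0) (mbad k%:Z)) (lerD (pbad 0) (pbad k%:Z))).
apply: pr_dist_le; [exact: measurableI|exact: measurableI|exact: measurableU|].
move=> w H; have H0 : ~ bad 0 w by move=> X; apply: H; left.
have Hk : ~ bad k%:Z w by move=> X; apply: H; right.
by rewrite /A /A' /B /B' /= !off.
Qed.

End TMA.

Theorem theorem3p2 (d0 : measure_display) (T : measurableType d0)
  (R : realType) (P : probability T R)
  (e : int -> T -> R) (f : R -> R)
  (q d : nat) (r mu1 mu2 : R) (phi psi : 'I_q -> R)
  (y : int -> T -> R) :
  (forall n, measurable_fun setT (e n)) ->
  mutually_independent P e ->
  (forall n, has_density P (e n) f) ->
  continuous f -> (exists M : R, forall x, f x <= M) -> (forall x, 0 < f x) ->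
  (1 <= q)%N -> (1 <= d)%N ->
  (forall n, measurable_fun setT (y n)) ->
  (forall n, {ae P, forall w, y n w = tma_rhs e d r mu1 mu2 phi psi y n w}) ->
  strictly_stationary P y ->
  exists rho : R, 0 < rho < 1 /\
    forall u v : R, exists C : R, exists K : nat, forall k : nat, (K <= k)%N ->
      `| fine (P ([set w | y 0 w <= u] `&` [set w | y k%:Z w <= v]))
         - fine (P [set w | y 0 w <= u]) * fine (P [set w | y k%:Z w <= v]) |
      <= C * rho ^+ k.
Proof.
move=> me ind dens fc _ fpos _ d_gt0 my y_tma _.
set p := p_reset P e q r mu1 mu2 phi psi; set D := block_len q d.
have D_gt0 : (0 < D)%N by rewrite muln_gt0.
have p_gt0 : 0 < p := p_reset_gt0 P e f q r mu1 mu2 phi psi me ind dens fc fpos.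
have p_le1 : p <= 1 := p_reset_le1 P e q r mu1 mu2 phi psi me.
have [rho_gt0 rho_lt1] := andP (@geometric_rate_itv _ _ _ p_gt0 p_le1 D_gt0).
exists (geometric_rate p D); split; first by rewrite rho_gt0.
move=> u v; exists (4 / geometric_rate p D ^+ (q + d + D)), (q + d + 1)%N => k hk.
pose N := ((k - (q + d + 1)) %/ D)%N.
have cov := @tma_cov_le _ _ _ P e f q d r mu1 mu2 phi psi
  me ind dens d_gt0 y my y_tma N k u v.
apply: le_trans (cov _) _; first by have := leq_divM (k - (q + d + 1)) D; lia.
rewrite mulrAC -mulrA ler_pM2l //; apply: le_trans (@geometric_rate_block _ _ _ p_gt0 p_le1 D_gt0 N) _.
apply: expr_le_shift; first by rewrite rho_gt0 ltW.
by have := ltn_ceil (k - (q + d + 1)) D_gt0; rewrite -/N; lia.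
Qed.
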